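(* Let $T$ be a $P$-Petri net, let $F\subseteq P$, let $\rho$ be a $(T,F)$-stabilized $P$-configuration, let $h$ be a positive integer with $h\geq\|T\|_\infty(1+\|T\|_\infty)^{|P|^{|P|}}$, and let $R=\{p\in P\mid\rho(p)<h\}$. Then every $P$-configuration $\alpha$ with $\alpha|_R\leq\rho|_R$ is $(T,F)$-stabilized.
   Context: A $P$-configuration is a map in $\mathbb{N}^P$; $\alpha\leq\beta$ means $\beta=\alpha+\rho$ for some configuration $\rho$ (componentwise order). For a finite set $R$, $\rho|_R$ is the $R$-configuration with $\rho|_R(q)=\rho(q)$ if $q\in P$ and $0$ otherwise. A $P$-Petri net $T$ is a finite set of pairs $t=(\alpha_t,\beta_t)$ of $P$-configurations; $\alpha\xrightarrow{t}\beta$ iff $\alpha=\alpha_t+\rho$, $\beta=\beta_t+\rho$ for some $\rho$; $\alpha\xrightarrow{T^*}\beta$ iff $\beta$ is reachable from $\alpha$ by a finite sequence of such steps with transitions in $T$. $\|T\|_\infty$ is the maximum entry of all $\alpha_t,\beta_t$ for $t\in T$. A $P$-configuration $\rho$ is $(T,F)$-stabilized if every $\beta$ with $\rho\xrightarrow{T^*}\beta$ satisfies $\beta(p)=0$ for all $p\in P\setminus F$. *)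

From mathcomp Require Import all_boot.
From Stdlib Require Import Relations.
Set Implicit Arguments. Unset Strict Implicit. Unset Printing Implicit Defensive.

Definition config (P : finType) := {ffun P -> nat}.

Definition cle (P : finType) (a b : config P) : Prop := forall p, a p <= b p.

Definition petri_net (P : finType) := seq (config P * config P).

Definition step (P : finType) (t : config P * config P) (a b : config P) : Prop :=
  exists rho : config P, (forall p, a p = t.1 p + rho p) /\ (forall p, b p = t.2 p + rho p).

Definition step_net (P : finType) (T : petri_net P) (a b : config P) : Prop :=
  exists2 t, t \in T & step t a b.

Definition reach (P : finType) (T : petri_net P) : relation (config P) :=
  clos_refl_trans (config P) (@step_net P T).

Definition norm_inf (P : finType) (T : petri_net P) : nat :=
  \max_(t <- T) \max_(p : P) maxn (t.1 p) (t.2 p).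

Definition stabilized (P : finType) (T : petri_net P) (F : {set P}) (rho : config P) : Prop :=
  forall beta, reach T rho beta -> forall p, p \notin F -> beta p = 0.

From mathcomp Require Import all_boot zify.
From Stdlib Require Import Relations.
Set Implicit Arguments. Unset Strict Implicit. Unset Printing Implicit Defensive.

(* Induction on the number m of places of R = {q | rho q < h}, with h at least
   B_(m+1) >= B_m + N * B_m ^ #|P|, where B_m is [threshold N #|P| m].  Suppose
   alpha ->* beta with beta p > 0 for some p outside F; then p is in R.  Cut the
   run at its first configuration x having a place of R with at least B_m tokens
   (or at beta).  Before x the R-parts range over at most B_m ^ #|P| values, so
   after removing loops the run projected on R has at most B_m ^ #|P| steps, and
   it can be replayed from rho, which has at least h tokens outside R.  This
   yields rho ->* e with e >= x on R and e >= B_m outside R.  If x = beta then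
   e p > 0, contradicting the stability of rho.  Otherwise e is stabilized and
   has fewer places below B_m than rho below h, so x is stabilized by induction,
   which contradicts x ->* beta. *)

Section Chains.
Variables (A : Type) (r : A -> A -> Prop).

(* A Prop-valued [path]: [step_net] is not a boolean relation. *)
Fixpoint chain (a : A) (s : seq A) : Prop :=
  if s is b :: s' then r a b /\ chain b s' else True.

Lemma chain_cat a s1 s2 : chain a (s1 ++ s2) <-> chain a s1 /\ chain (last a s1) s2.
Proof. by elim: s1 a => [|b s1 IHs1] a /=; [tauto | rewrite IHs1; tauto]. Qed.

Lemma clos_rt_chain a b : clos_refl_trans A r a b <-> exists2 s, chain a s & last a s = b.
Proof.
split.
  elim=> {a b} [a b rab | a | a b c _ [s1 C1 L1] _ [s2 C2 L2]].
  - by exists [:: b].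
  - by exists [::].
  - by exists (s1 ++ s2); [apply/chain_cat; rewrite L1 | rewrite last_cat L1].
case=> s; elim: s a => [|c s IHs] a /= => [_ <- | [rac Cs] Ls]; first exact: rt_refl.
exact: rt_trans (rt_step _ _ _ _ rac) (IHs _ Cs Ls).
Qed.

End Chains.

Lemma chain_map (A B : Type) (r : A -> A -> Prop) (r' : B -> B -> Prop) (f : A -> B) a s :
  (forall x y, r x y -> r' (f x) (f y)) -> chain r a s -> chain r' (f a) (map f s).
Proof. by move=> fr; elim: s a => [|b s IHs] a //= [/fr ? /IHs]. Qed.

Lemma chain_loopfree (A : eqType) (r : A -> A -> Prop) a s : chain r a s ->
  exists s', [/\ chain r a s', last a s' = last a s, {subset s' <= s} & uniq (a :: s')].
Proof.
elim: s a => [|b s IHs] a /=; first by exists [::].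
case=> rab /IHs [s' [Cs' Ls' Ss' Us']].
have sub_bs : {subset b :: s' <= b :: s}.
  by move=> y; rewrite !inE => /predU1P [-> | /Ss' ->]; rewrite ?eqxx ?orbT.
have [a_in | a_notin] := boolP (a \in b :: s'); last first.
  by exists (b :: s'); split; rewrite /= ?a_notin.
have [l1 [l2 Ebs]] : exists l1 l2, b :: s' = l1 ++ a :: l2.
  by case/splitPr: a_in => l1 l2; exists l1, l2.
have : chain r a (b :: s') by [].
rewrite Ebs => /chain_cat [_ /= [_ Cl2]].
exists l2; split=> //.
- by rewrite -Ls' -[last b s']/(last a (b :: s')) Ebs last_cat.
- by move=> y yl2; apply: sub_bs; rewrite Ebs mem_cat inE yl2 !orbT.
- by move: Us'; rewrite Ebs cat_uniq => /and3P [].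
Qed.

Lemma split_first_exit (A : Type) (S : pred A) a s : exists s1 s2,
  [/\ s = s1 ++ s2, all S (belast a s1) & s2 = [::] \/ ~~ S (last a s1)].
Proof.
elim: s a => [|b s IHs] a; first by exists [::], [::]; split=> //; left.
have [Sa | nSa] := boolP (S a); last by exists [::], (b :: s); split=> //; right.
have [s1 [s2 [-> all_s1 exit_s2]]] := IHs b.
by exists (b :: s1), s2; split; rewrite //= Sa.
Qed.

Section Restriction.
Variables (P : finType) (R : {set P}).

Definition restrict (c : config P) : config P := [ffun q => if q \in R then c q else 0].

(* Places outside R are forgotten, i.e. treated as carrying unboundedly many tokens. *)
Definition restrict_net (T : petri_net P) : petri_net P :=
  [seq (restrict t.1, restrict t.2) | t <- T].

Definition covers (a : config P) (K : nat) (d : config P) : Prop :=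
  (forall q, q \in R -> a q <= d q) /\ (forall q, q \notin R -> K <= d q).

Lemma restrict_in c q : q \in R -> restrict c q = c q.
Proof. by move=> qR; rewrite ffunE qR. Qed.

Lemma covers_restrict a K d : covers (restrict a) K d <-> covers a K d.
Proof.
rewrite /covers; split=> -[le_R le_out]; split=> // q qR.
  by rewrite -restrict_in // le_R.
by rewrite restrict_in // le_R.
Qed.

Lemma covers_low_sub a K d q0 : covers a K d -> q0 \in R -> K <= a q0 ->
  [set q | d q < K] \subset R :\ q0.
Proof.
move=> [le_R le_out] q0R K_le_a; apply/subsetP => q; rewrite in_setD1 in_set => d_q.
have qR : q \in R by apply: contraTT d_q => /le_out; rewrite -leqNgt.
rewrite qR andbT; apply: contraTneq d_q => ->.
by rewrite -leqNgt (leq_trans K_le_a) ?le_R.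
Qed.

Lemma step_restrict T a b : step_net T a b -> step_net (restrict_net T) (restrict a) (restrict b).
Proof.
case=> t tT [rho [Ea Eb]]; exists (restrict t.1, restrict t.2); first exact: map_f.
by exists (restrict rho); split=> q; rewrite !ffunE; case: ifP.
Qed.

End Restriction.

Lemma norm_inf_pre (P : finType) (T : petri_net P) (t : config P * config P) q :
  t \in T -> t.1 q <= norm_inf T.
Proof.
move=> tT; apply: leq_trans (leq_maxl _ (t.2 q)) _.
apply: leq_trans (leq_bigmax (F := fun p => maxn (t.1 p) (t.2 p)) q) _.
exact: (leq_bigmax_seq (F := fun t : config P * config P => \max_p maxn (t.1 p) (t.2 p))).
Qed.

Section Lifting.
Variables (P : finType) (T : petri_net P) (R : {set P}).
Local Notation N := (norm_inf T).

Lemma fire_restrict_lift (t : config P * config P) a b d K : t \in T ->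
  step (restrict R t.1, restrict R t.2) a b -> covers R a (N + K) d ->
  exists2 e, step t d e & covers R b K e.
Proof.
move=> tT [r [/= Ea Eb]] [le_R le_out].
have enabled q : t.1 q <= d q.
  have [qR | qR] := boolP (q \in R).
    by have := le_R q qR; rewrite Ea restrict_in //; lia.
  by have := le_out q qR; have := norm_inf_pre q tT; lia.
exists [ffun q => d q - t.1 q + t.2 q].
  exists [ffun q => d q - t.1 q].
  by split=> q; rewrite !ffunE; have := enabled q; lia.
split=> q qR; rewrite ffunE.
  by have := le_R q qR; have := enabled q; rewrite Ea Eb !restrict_in //; lia.
by have := le_out q qR; have := norm_inf_pre q tT; have := enabled q; lia.
Qed.

Lemma step_restrict_lift a b d K : step_net (restrict_net R T) a b ->
  covers R a (N + K) d -> exists2 e, step_net T d e & covers R b K e.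
Proof.
case=> _ /mapP [t tT ->] ab /(fire_restrict_lift tT ab) [e de cov_e].
by exists e => //; exists t.
Qed.

Lemma chain_restrict_lift a s d K : chain (step_net (restrict_net R T)) a s ->
  covers R a (N * size s + K) d -> exists2 e, reach T d e & covers R (last a s) K e.
Proof.
elim: s a d => [|b s IHs] a d /= => [_ [le_R le_out] | [ab Cs] cov].
  by exists d; [apply: rt_refl | split=> // q /le_out; rewrite muln0].
have [d' dd' cov'] : exists2 d', step_net T d d' & covers R b (N * size s + K) d'.
  by apply: step_restrict_lift ab _; rewrite addnA -mulnS.
have [e d'e cov_e] := IHs _ _ Cs cov'.
by exists e => //; apply: rt_trans (rt_step _ _ _ _ dd') d'e.
Qed.

End Lifting.

Section ConfigsBelow.
Variables (P : finType) (B : nat).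

Definition configs_below : seq (config P) :=
  [seq [ffun q => val (f q)] | f : {ffun P -> 'I_B} <- enum {ffun P -> 'I_B}].

Lemma size_configs_below : size configs_below = B ^ #|P|.
Proof. by rewrite size_map -cardE card_ffun card_ord. Qed.

Lemma mem_configs_below (c : config P) : (forall q, c q < B) -> c \in configs_below.
Proof.
move=> c_lt; apply/mapP; exists [ffun q => Ordinal (c_lt q)]; first by rewrite mem_enum.
by apply/ffunP => q; rewrite !ffunE.
Qed.

End ConfigsBelow.

Definition threshold (N d m : nat) : nat := (1 + N) ^ (\sum_(i < m) d ^ i).

Lemma threshold_gt0 N d m : 0 < threshold N d m.
Proof. by rewrite expn_gt0. Qed.

Lemma threshold_step N d m : 0 < d ->
  threshold N d m + N * threshold N d m ^ d <= threshold N d m.+1.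
Proof.
move=> d_gt0; rewrite /threshold.
have -> : \sum_(i < m.+1) d ^ i = 1 + d * \sum_(i < m) d ^ i.
  by rewrite big_ord_recl big_distrr; congr (_ + _); apply: eq_bigr => i _; rewrite expnS.
rewrite expnD expn1 [d * _]mulnC expnM mulnDl mul1n leq_add2r.
by rewrite -{1}[_ ^ _ in X in X <= _]expn1 leq_pexp2l ?expn_gt0.
Qed.

Lemma threshold_bound N d : threshold N d d <= maxn 1 (N * (1 + N) ^ (d ^ d)).
Proof.
case: N => [|N]; first by rewrite /threshold exp1n.
apply: leq_trans (leq_maxr _ _); apply: leq_trans (leq_pmull _ _) => //.
rewrite leq_pexp2l //; case: d => [|d]; first by rewrite big_ord0.
apply: (@leq_trans (\sum_(i < d.+1) d.+1 ^ d)); last by rewrite sum_nat_const card_ord -expnS.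
by apply: leq_sum => i _; rewrite leq_pexp2l // -ltnS.
Qed.

Section Stabilization.
Variables (P : finType) (T : petri_net P) (F : {set P}).
Local Notation N := (norm_inf T).

Lemma stabilized_reach rho e : stabilized T F rho -> reach T rho e -> stabilized T F e.
Proof. by move=> Srho rho_e b e_b; apply: Srho; apply: rt_trans rho_e e_b. Qed.

Lemma stabilized_notin_low rho h p : stabilized T F rho -> 0 < h -> p \notin F ->
  p \in [set q | rho q < h].
Proof. by move=> Srho h_gt0 pF; rewrite inE (Srho rho (rt_refl _ _ _) p pF). Qed.

Lemma short_restricted_run (R : {set P}) B alpha gamma : 0 < B -> reach T alpha gamma ->
  exists x, [/\ reach T x gamma, x = gamma \/ (exists2 q, q \in R & B <= x q) &
    exists2 s, chain (step_net (restrict_net R T)) (restrict R alpha) s &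
      last (restrict R alpha) s = restrict R x /\ size s <= B ^ #|P|].
Proof.
move=> B_gt0 /clos_rt_chain [s Cs <-].
pose inbox (c : config P) := [forall q in R, c q < B].
have [s1 [s2 [Es inbox_s1 exit_s2]]] := split_first_exit inbox alpha s.
rewrite {s}Es in Cs *; have /chain_cat [C1 C2] := Cs.
exists (last alpha s1); split.
- by apply/clos_rt_chain; exists s2; rewrite ?last_cat.
- case: exit_s2 => [-> | /forallPn [q]]; first by left; rewrite cats0.
  by rewrite negb_imply -leqNgt => /andP [qR Bq]; right; exists q.
have restrict_below c : c \in alpha :: s1 ->
    restrict R c \in restrict R (last alpha s1) :: configs_below P B.
  rewrite lastI mem_rcons inE => /predU1P [-> | c_in]; first exact: mem_head.
  rewrite inE mem_configs_below ?orbT // => q; rewrite ffunE; case: ifP => // qR.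
  by move/allP: inbox_s1 => /(_ c c_in) /forall_inP /(_ q qR).
have [t [Ct Lt St Ut]] := chain_loopfree (chain_map (@step_restrict _ R T) C1).
exists t => //; split; first by rewrite Lt last_map.
suff : size (restrict R alpha :: t) <= size (restrict R (last alpha s1) :: configs_below P B).
  by rewrite /= size_configs_below ltnS.
apply: uniq_leq_size => // _ /predU1P [-> | /St /mapP [c c_s1 ->]].
  by rewrite restrict_below ?mem_head.
by rewrite restrict_below // inE c_s1 orbT.
Qed.

Lemma stabilized_threshold m (rho alpha : config P) h :
  stabilized T F rho -> threshold N #|P| m <= h -> #|[set q | rho q < h]| <= m ->
  (forall p, p \in [set q | rho q < h] -> alpha p <= rho p) -> stabilized T F alpha.
Proof.
elim: m rho alpha h => [|m IHm] rho alpha h Srho th_h card_R le_alpha beta alpha_beta p pF;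
  have pR := stabilized_notin_low Srho (leq_trans (threshold_gt0 _ _ _) th_h) pF;
  set R := [set q | rho q < h] in card_R le_alpha pR.
  by move: card_R; rewrite leqn0 => /eqP /cards0_eq R0; rewrite R0 inE in pR.
apply/eqP; rewrite -leqn0 leqNgt; apply/negP => beta_p.
set B := threshold N #|P| m.
have B_gt0 : 0 < B := threshold_gt0 _ _ _.
have rho_high q : q \notin R -> N * B ^ #|P| + B <= rho q.
  rewrite inE -leqNgt addnC; apply: leq_trans; apply: leq_trans th_h.
  by apply: threshold_step; apply/card_gt0P; exists p.
have [x [x_beta x_exit [s Cs [Ls size_s]]]] := short_restricted_run R B_gt0 alpha_beta.
have [e rho_e] : exists2 e, reach T rho e & covers R (restrict R x) B e.
  rewrite -Ls; apply: chain_restrict_lift Cs _.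
  apply/covers_restrict; split=> // q /rho_high; apply: leq_trans.
  by rewrite leq_add2r leq_mul2l size_s orbT.
move/covers_restrict => x_le_e.
case: x_exit => [x_eq | [q0 q0R B_le_x]].
  have := x_le_e.1 p pR; rewrite x_eq (Srho e rho_e p pF).
  by rewrite leqn0 => /eqP beta_p0; rewrite beta_p0 in beta_p.
have low_e_sub := covers_low_sub x_le_e q0R B_le_x.
have Sx : stabilized T F x.
  apply: (IHm e x B (stabilized_reach Srho rho_e) (leqnn _)).
    apply: leq_trans (subset_leq_card low_e_sub) _.
    by move: card_R; rewrite (cardsD1 q0) q0R add1n ltnS.
  by move=> q /(subsetP low_e_sub); rewrite in_setD1 => /andP [_ /x_le_e.1].
by move: beta_p; rewrite (Sx _ x_beta p pF).
Qed.

End Stabilization.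

Theorem lemma5p4 (P : finType) (T : petri_net P) (F : {set P}) (rho : config P) (h : nat) :
  stabilized T F rho ->
  0 < h ->
  norm_inf T * (1 + norm_inf T) ^ (#|P| ^ #|P|) <= h ->
  forall alpha : config P,
    (forall p, p \in [set q | rho q < h] -> alpha p <= rho p) ->
    stabilized T F alpha.
Proof.
move=> Srho h_gt0 h_large alpha le_alpha.
apply: (stabilized_threshold Srho _ (max_card _) le_alpha).
by apply: leq_trans (threshold_bound _ _) _; rewrite geq_max h_gt0.
Qed.
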